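(* Let $w=0$ in the dynamical system described in the context. Let $(\Sigma_+,\Sigma_A,\Sigma_B,\Sigma_C,v_{(1)},v_{(2)},\Omega_{(1)},\Omega_{(2)})(\tau)$ be a solution defined for all $\tau\ge\tau_0$ which at $\tau_0$ lies in the interior state space, i.e. $\Omega_{(1)}\Omega_{(2)}>0$ and $0<v_{(i)}^2<1$ for $i=1,2$, and satisfies the constraints. Then as $\tau\to+\infty$: $q\to \tfrac12$, $\Omega_{(1)}+\Omega_{(2)}\to 1$, $\Sigma_+,\Sigma_A,\Sigma_B,\Sigma_C\to 0$ and $v_{(1)},v_{(2)}\to 0$; i.e. the solution approaches the line of flat Friedmann–Lemaître fixed points $\Sigma_\pm=\Sigma_A=\Sigma_B=\Sigma_C=0$, $v_{(1)}=v_{(2)}=0$, $\Omega_{(1)}+\Omega_{(2)}=1$.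
   Context: Fix a constant $w\in[0,1)$ (the common equation of state parameter of two perfect fluids, $p_{(i)}=w\rho_{(i)}$). The state variables are real functions of a time $\tau$: $\Sigma_+,\Sigma_A,\Sigma_B,\Sigma_C,v_{(1)},v_{(2)},\Omega_{(1)},\Omega_{(2)}$, with $'$ denoting $d/d\tau$. Define $\Sigma^2=\Sigma_+^2+\Sigma_A^2+\Sigma_B^2+\Sigma_C^2$, $G^{(i)}_\pm=1\pm w v_{(i)}^2$, $Q_{(i)}=(1+w)(G^{(i)}_+)^{-1}v_{(i)}\Omega_{(i)}$, $P_{(i)}=w\Omega_{(i)}+\tfrac13(1-3w)Q_{(i)}v_{(i)}$, $\Omega_m=\Omega_{(1)}+\Omega_{(2)}$, $P_m=P_{(1)}+P_{(2)}$, and $q=2\Sigma^2+\tfrac12(\Omega_m+3P_m)$. The evolution equations are $\Sigma_+'=-(2-q)\Sigma_++3\Sigma_A^2-Q_{(1)}v_{(1)}-Q_{(2)}v_{(2)}$, $\Sigma_A'=-(2-q+3\Sigma_++\sqrt3\Sigma_B)\Sigma_A$, $\Sigma_B'=-(2-q)\Sigma_B+\sqrt3\Sigma_A^2-2\sqrt3\Sigma_C^2$, $\Sigma_C'=-(2-q-2\sqrt3\Sigma_B)\Sigma_C$, $v_{(i)}'=(G^{(i)}_-)^{-1}(1-v_{(i)}^2)(3w-1+2\Sigma_+)v_{(i)}$, $\Omega_{(i)}'=(2q-1-3w)\Omega_{(i)}+(3w-1+2\Sigma_+)Q_{(i)}v_{(i)}$, for $i=1,2$, subject to the constraints $1-\Sigma^2-\Omega_{(1)}-\Omega_{(2)}=0$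 and $Q_{(1)}+Q_{(2)}=0$, with $\Omega_{(i)}\ge0$, $v_{(i)}^2\le 1$. (This describes Bianchi type I cosmologies with two tilted perfect fluids, in expansion-normalized variables.) *)

From Stdlib Require Import Reals Lra.
Open Scope R_scope.

(* Bianchi I, two tilted perfect fluids, expansion-normalized variables,
   with common equation of state parameter w. *)
Definition Sig2 (Sp SA SB SC : R) : R := Sp^2 + SA^2 + SB^2 + SC^2.
Definition Gp (w v : R) : R := 1 + w * v^2.
Definition Gm (w v : R) : R := 1 - w * v^2.
Definition Qf (w v Om : R) : R := (1 + w) * / Gp w v * v * Om.
Definition Pf (w v Om : R) : R := w * Om + / 3 * (1 - 3 * w) * Qf w v Om * v.
Definition qf (w Sp SA SB SC v1 v2 O1 O2 : R) : R :=
  2 * Sig2 Sp SA SB SC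
  + / 2 * ((O1 + O2) + 3 * (Pf w v1 O1 + Pf w v2 O2)).

Definition tends_to_infty (f : R -> R) (l : R) : Prop :=
  forall eps, 0 < eps -> exists T, forall t, T <= t -> Rabs (f t - l) < eps.

From Stdlib Require Import Reals Lra Psatz Classical.
Open Scope R_scope.

(* With w = 0 we have Q_(i) = v_(i) Omega_(i) and 2q - 1 = 3 Sigma^2 + V - C,
   where V = v_(1)^2 Omega_(1) + v_(2)^2 Omega_(2) and C = 1 - Sigma^2 - Omega_m
   is the Gauss constraint.  The proof has four steps.
   1. C' = 2 q C, so the constraint holds for all times; Omega_(i) solves a
      linear equation, so it stays positive (Gronwall-type uniqueness lemmas).
   2. Hence P := 2q - 1 = 3 Sigma^2 + V >= 0, and the tilt weights
      G_(i) = Omega_(i)^2 (1 - v_(i)^2) satisfy G_(i)' = 2 P G_(i); they are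
      positive (so v_(i)^2 < 1 throughout), nondecreasing and bounded by 1.
   3. All state variables are bounded, so their derivatives are bounded and P
      is Lipschitz.  A Barbalat-type lemma (a bounded function whose derivative
      dominates a nonnegative Lipschitz function P forces P -> 0) gives P -> 0.
   4. Every quantity in the conclusion is controlled by P: q - 1/2 = P/2,
      1 - Omega_m = Sigma^2 <= P, each Sigma_X^2 <= P, v_(i)^2 <= P / G_(i)(tau0). *)

Lemma derivable_pt_lim_eq f x l l' :
  derivable_pt_lim f x l -> l = l' -> derivable_pt_lim f x l'.
Proof. intros H <-; exact H. Qed.

Lemma derivable_pt_lim_sq f x l :
  derivable_pt_lim f x l -> derivable_pt_lim (fun t => f t ^ 2) x (2 * f x * l).
Proof.
  intros H. eapply derivable_pt_lim_eq.
  - apply (derivable_pt_lim_comp f (fun y => y ^ 2)); [exact H | apply derivable_pt_lim_pow].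
  - simpl. ring.
Qed.

Lemma derivable_pt_lim_exp_lin k x :
  derivable_pt_lim (fun t => exp (k * t)) x (exp (k * x) * k).
Proof.
  eapply derivable_pt_lim_eq.
  - apply (derivable_pt_lim_comp (fun t => k * t) exp); [|apply derivable_pt_lim_exp].
    eapply derivable_pt_lim_eq;
      [apply derivable_pt_lim_scal; apply derivable_pt_lim_id | reflexivity].
  - ring.
Qed.

Ltac derive :=
  repeat first
    [ eassumption | apply derivable_pt_lim_const | apply derivable_pt_lim_sq
    | apply derivable_pt_lim_exp_lin | apply derivable_pt_lim_minus
    | apply derivable_pt_lim_plus | apply derivable_pt_lim_opp
    | apply derivable_pt_lim_mult ].

Lemma derivable_pt_lim_continuous f x l : derivable_pt_lim f x l -> continuity_pt f x.
Proof. intros H. apply derivable_continuous_pt. exists l. exact H. Qed.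

Lemma continuity_pt_sq f x : continuity_pt f x -> continuity_pt (fun t => f t ^ 2) x.
Proof.
  intros H. apply (continuity_pt_mult f (fun t => f t ^ 1)); [exact H|].
  apply (continuity_pt_mult f (fun _ => 1)); [exact H|].
  apply continuity_pt_const. intros a b; reflexivity.
Qed.

Lemma continuity_pt_cst c x : continuity_pt (fun _ => c) x.
Proof. apply continuity_pt_const. intros a b; reflexivity. Qed.

Ltac solve_continuity :=
  repeat first
    [ eassumption | apply continuity_pt_cst | apply continuity_pt_sq
    | apply continuity_pt_minus | apply continuity_pt_plus | apply continuity_pt_opp
    | apply continuity_pt_mult ].

Lemma Rabs_le_inv x b : Rabs x <= b -> - b <= x <= b.
Proof. unfold Rabs; destruct (Rcase_abs x); lra. Qed.

Lemma nondecreasing_of_deriv f f' a c :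
  a <= c -> (forall t, a <= t <= c -> derivable_pt_lim f t (f' t)) ->
  (forall t, a <= t <= c -> 0 <= f' t) -> f a <= f c.
Proof.
  intros Hac Hd Hpos. destruct (Req_dec a c) as [<-|Hne]; [lra|].
  destruct (MVT_cor2 f f' a c) as [d [Hmvt Hd']]; [lra | intros; apply Hd; lra |].
  specialize (Hpos d ltac:(lra)). nra.
Qed.

Lemma continuous_bounded b a c : a <= c -> (forall t, a <= t <= c -> continuity_pt b t) ->
  exists K, forall t, a <= t <= c -> Rabs (b t) <= K.
Proof.
  intros Hac Hc.
  destruct (continuity_ab_maj (fun t => Rabs (b t)) a c Hac) as [M [HM _]].
  - intros t Ht. apply (continuity_pt_comp b Rabs); [auto | apply Rcontinuity_abs].
  - exists (Rabs (b M)). exact HM.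
Qed.

Lemma linear_ode_envelope X b a c K : a <= c ->
  (forall t, a <= t <= c -> derivable_pt_lim X t (b t * X t)) ->
  (forall t, a <= t <= c -> Rabs (b t) <= K) ->
  X c ^ 2 * exp (- (2 * K) * c) <= X a ^ 2 * exp (- (2 * K) * a) /\
  X a ^ 2 * exp (2 * K * a) <= X c ^ 2 * exp (2 * K * c).
Proof.
  intros Hac Hd Hb. split.
  - enough (- (X a ^ 2 * exp (- (2 * K) * a)) <= - (X c ^ 2 * exp (- (2 * K) * c)))
      by lra.
    apply (nondecreasing_of_deriv (fun t => - (X t ^ 2 * exp (- (2 * K) * t)))
             (fun t => 2 * (K - b t) * (X t ^ 2 * exp (- (2 * K) * t)))); [exact Hac| |].
    + intros t Ht. pose proof (Hd t Ht).
      eapply derivable_pt_lim_eq; [derive | cbv beta; ring].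
    + intros t Ht. pose proof (Rabs_le_inv _ _ (Hb t Ht)).
      pose proof (exp_pos (- (2 * K) * t)). pose proof (pow2_ge_0 (X t)).
      apply Rmult_le_pos; nra.
  - apply (nondecreasing_of_deriv (fun t => X t ^ 2 * exp (2 * K * t))
             (fun t => 2 * (K + b t) * (X t ^ 2 * exp (2 * K * t)))); [exact Hac| |].
    + intros t Ht. pose proof (Hd t Ht).
      eapply derivable_pt_lim_eq; [derive | cbv beta; ring].
    + intros t Ht. pose proof (Rabs_le_inv _ _ (Hb t Ht)).
      pose proof (exp_pos (2 * K * t)). pose proof (pow2_ge_0 (X t)).
      apply Rmult_le_pos; nra.
Qed.

Lemma linear_ode_zero X b t0 :
  (forall t, t0 <= t -> derivable_pt_lim X t (b t * X t)) ->
  (forall t, t0 <= t -> continuity_pt b t) ->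
  X t0 = 0 -> forall t, t0 <= t -> X t = 0.
Proof.
  intros Hd Hc H0 t Ht.
  destruct (continuous_bounded b t0 t Ht) as [K HK]; [intros; apply Hc; lra|].
  destruct (linear_ode_envelope X b t0 t K Ht) as [Hdecay _]; [intros; apply Hd; lra | exact HK |].
  rewrite H0 in Hdecay. pose proof (exp_pos (- (2 * K) * t)).
  assert (X t ^ 2 <= 0) by nra. nra.
Qed.

(* A solution of X' = b X (b continuous) positive at t0 stays positive: it
   cannot reach 0, by the intermediate value theorem and the envelope. *)
Lemma linear_ode_pos X b t0 :
  (forall t, t0 <= t -> derivable_pt_lim X t (b t * X t)) ->
  (forall t, t0 <= t -> continuity_pt b t) ->
  0 < X t0 -> forall t, t0 <= t -> 0 < X t.
Proof.
  intros Hd Hc H0 t Ht.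
  destruct (Rlt_or_le 0 (X t)) as [|Hneg]; [assumption|]. exfalso.
  destruct (prolongement_C0 X t0 t Ht) as [g [Hg Hgx]].
  { intros s Hs. eapply derivable_pt_lim_continuous. apply Hd. lra. }
  destruct (IVT_cor g t0 t Hg Ht) as [z [Hz Hgz]]; [rewrite !Hgx by lra; nra|].
  rewrite Hgx in Hgz by lra.
  destruct (continuous_bounded b t0 z) as [K HK]; [lra | intros; apply Hc; lra|].
  destruct (linear_ode_envelope X b t0 z K) as [_ Hgrowth];
    [lra | intros; apply Hd; lra | exact HK |].
  rewrite Hgz in Hgrowth. pose proof (exp_pos (2 * K * t0)).
  assert (X t0 ^ 2 <= 0) by nra. nra.
Qed.

Definition bounded_from (t0 : R) (f : R -> R) : Prop :=
  exists B, forall t, t0 <= t -> Rabs (f t) <= B.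

Definition lipschitz_from (t0 : R) (f : R -> R) : Prop :=
  exists L, forall s t, t0 <= s -> t0 <= t -> Rabs (f s - f t) <= L * Rabs (s - t).

Section HalfLineCalculus.
Variable t0 : R.

Lemma bounded_const c : bounded_from t0 (fun _ => c).
Proof. exists (Rabs c). intros; lra. Qed.

Lemma bounded_plus f g :
  bounded_from t0 f -> bounded_from t0 g -> bounded_from t0 (fun t => f t + g t).
Proof.
  intros [Bf Hf] [Bg Hg]. exists (Bf + Bg). intros t Ht.
  pose proof (Rabs_triang (f t) (g t)). pose proof (Hf t Ht). pose proof (Hg t Ht). lra.
Qed.

Lemma bounded_opp f : bounded_from t0 f -> bounded_from t0 (fun t => - f t).
Proof. intros [B H]. exists B. intros t Ht. rewrite Rabs_Ropp. auto. Qed.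

Lemma bounded_minus f g :
  bounded_from t0 f -> bounded_from t0 g -> bounded_from t0 (fun t => f t - g t).
Proof. intros Hf Hg. apply (bounded_plus f (fun t => - g t)); [|apply bounded_opp]; auto. Qed.

Lemma bounded_mult f g :
  bounded_from t0 f -> bounded_from t0 g -> bounded_from t0 (fun t => f t * g t).
Proof.
  intros [Bf Hf] [Bg Hg]. exists (Bf * Bg). intros t Ht. rewrite Rabs_mult.
  apply Rmult_le_compat; auto using Rabs_pos.
Qed.

Lemma bounded_pow f n : bounded_from t0 f -> bounded_from t0 (fun t => f t ^ n).
Proof.
  intros Hf. induction n as [|n IH]; simpl; [apply bounded_const | apply bounded_mult; auto].
Qed.

Lemma lipschitz_const c : lipschitz_from t0 (fun _ => c).
Proof.
  exists 0. intros s t _ _. rewrite Rminus_diag, Rabs_R0. pose proof (Rabs_pos (s - t)). lra.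
Qed.

Lemma lipschitz_plus f g :
  lipschitz_from t0 f -> lipschitz_from t0 g -> lipschitz_from t0 (fun t => f t + g t).
Proof.
  intros [Lf Hf] [Lg Hg]. exists (Lf + Lg). intros s t Hs Ht.
  pose proof (Rabs_triang (f s - f t) (g s - g t)).
  pose proof (Hf s t Hs Ht). pose proof (Hg s t Hs Ht).
  replace (f s + g s - (f t + g t)) with (f s - f t + (g s - g t)) by ring. lra.
Qed.

Lemma lipschitz_opp f : lipschitz_from t0 f -> lipschitz_from t0 (fun t => - f t).
Proof.
  intros [L H]. exists L. intros s t Hs Ht.
  replace (- f s - - f t) with (- (f s - f t)) by ring. rewrite Rabs_Ropp. auto.
Qed.

Lemma lipschitz_minus f g :
  lipschitz_from t0 f -> lipschitz_from t0 g -> lipschitz_from t0 (fun t => f t - g t).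
Proof.
  intros Hf Hg. apply (lipschitz_plus f (fun t => - g t)); [|apply lipschitz_opp]; auto.
Qed.

(* Product rule for Lipschitz constants: f g - f' g' = f (g - g') + g' (f - f'). *)
Lemma lipschitz_mult f g : bounded_from t0 f -> bounded_from t0 g ->
  lipschitz_from t0 f -> lipschitz_from t0 g -> lipschitz_from t0 (fun t => f t * g t).
Proof.
  intros [Bf Hbf] [Bg Hbg] [Lf Hf] [Lg Hg]. exists (Bf * Lg + Bg * Lf). intros s t Hs Ht.
  replace (f s * g s - f t * g t) with (f s * (g s - g t) + g t * (f s - f t)) by ring.
  eapply Rle_trans; [apply Rabs_triang|]. rewrite !Rabs_mult.
  assert (Rabs (f s) * Rabs (g s - g t) <= Bf * (Lg * Rabs (s - t)))
    by (apply Rmult_le_compat; auto using Rabs_pos).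
  assert (Rabs (g t) * Rabs (f s - f t) <= Bg * (Lf * Rabs (s - t)))
    by (apply Rmult_le_compat; auto using Rabs_pos).
  lra.
Qed.

Lemma lipschitz_pow f n :
  bounded_from t0 f -> lipschitz_from t0 f -> lipschitz_from t0 (fun t => f t ^ n).
Proof.
  intros Hb Hf. induction n as [|n IH]; simpl; [apply lipschitz_const|].
  apply lipschitz_mult; auto using bounded_pow.
Qed.

Lemma lipschitz_of_bounded_deriv f f' :
  (forall t, t0 <= t -> derivable_pt_lim f t (f' t)) -> bounded_from t0 f' ->
  lipschitz_from t0 f.
Proof.
  intros Hd [M HM]. exists M.
  assert (Hmvt : forall s t, t0 <= s < t -> Rabs (f t - f s) <= M * Rabs (t - s)).
  { intros s t Hst.
    destruct (MVT_cor2 f f' s t) as [c [Heq Hc]]; [lra | intros; apply Hd; lra |].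
    rewrite Heq, Rabs_mult. apply Rmult_le_compat_r; [apply Rabs_pos | apply HM; lra]. }
  intros s t Hs Ht. destruct (Rtotal_order s t) as [Hlt|[<-|Hgt]].
  - rewrite <- Rabs_Ropp, (Rabs_minus_sym s t). 
    replace (- (f s - f t)) with (f t - f s) by ring. apply Hmvt; lra.
  - rewrite !Rminus_diag, Rabs_R0. lra.
  - apply Hmvt; lra.
Qed.

End HalfLineCalculus.

Ltac regularity :=
  repeat first
    [ assumption
    | apply bounded_const | apply lipschitz_const
    | apply bounded_minus | apply lipschitz_minus
    | apply bounded_plus | apply lipschitz_plus
    | apply bounded_opp | apply lipschitz_opp
    | apply bounded_pow | apply lipschitz_pow
    | apply bounded_mult | apply lipschitz_mult ].

Lemma bounded_nondecreasing_settles (G : R -> R) t0 M :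
  (forall t, t0 <= t -> G t <= M) -> (forall s t, t0 <= s <= t -> G s <= G t) ->
  forall del, 0 < del -> exists T, t0 <= T /\ forall s t, T <= s <= t -> G t - G s < del.
Proof.
  intros HGM Hmono del Hdel.
  destruct (completeness (fun y => exists t, t0 <= t /\ y = G t)) as [l [Hub Hlub]].
  { exists M. intros y [t [Ht ->]]. auto. }
  { exists (G t0), t0. split; [lra | reflexivity]. }
  assert (HT : exists T, t0 <= T /\ l - del < G T).
  { apply NNPP. intros Hno. enough (l <= l - del) by lra.
    apply Hlub. intros y [t [Ht ->]]. apply Rnot_lt_le. intros Hlt. apply Hno; eauto. }
  destruct HT as [T [HT0 HT]]. exists T. split; [exact HT0|]. intros s t Hst.
  assert (G t <= l) by (apply Hub; exists t; split; [lra | reflexivity]).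
  assert (G T <= G s) by (apply Hmono; lra).
  lra.
Qed.

(* Barbalat-type lemma: if a function G bounded above has a derivative
   dominating kap * P, where P >= 0 is Lipschitz, then P -> 0.  Otherwise
   P >= eps at arbitrarily late times t, hence P >= eps/2 on [t, t + h] for a
   fixed h, and G increases there by at least kap (eps/2) h, which contradicts
   the settling of G. *)
Lemma barbalat (G G' P : R -> R) t0 M kap :
  0 < kap ->
  (forall t, t0 <= t -> derivable_pt_lim G t (G' t)) ->
  (forall t, t0 <= t -> kap * P t <= G' t) ->
  (forall t, t0 <= t -> G t <= M) ->
  (forall t, t0 <= t -> 0 <= P t) ->
  lipschitz_from t0 P ->
  tends_to_infty P 0.
Proof.
  intros Hkap Hd HG' HGM HP [L0 HL] eps Heps.
  set (L := Rabs L0 + 1). assert (HL0 : 0 < L) by (unfold L; pose proof (Rabs_pos L0); lra).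
  set (h := eps / (2 * L)).
  assert (Hh : 0 < h) by (unfold h; apply Rdiv_lt_0_compat; lra).
  assert (HLh : L * h = eps / 2) by (unfold h; field; lra).
  assert (Hmono : forall s t, t0 <= s <= t -> G s <= G t).
  { intros s t Hst. apply (nondecreasing_of_deriv G G'); [lra | intros; apply Hd; lra |].
    intros u Hu. specialize (HG' u ltac:(lra)). specialize (HP u ltac:(lra)). nra. }
  destruct (bounded_nondecreasing_settles G t0 M HGM Hmono (kap * (eps / 2) * h))
    as [T [HT0 HT]]; [apply Rmult_lt_0_compat; [apply Rmult_lt_0_compat|]; lra|].
  exists T. intros t Ht.
  rewrite Rminus_0_r, Rabs_pos_eq by (apply HP; lra).
  apply Rnot_le_lt. intros Hbig.
  destruct (MVT_cor2 G G' t (t + h)) as [c [Heq Hc]]; [lra | intros; apply Hd; lra |].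
  specialize (HT t (t + h) ltac:(lra)).
  assert (HPc : eps / 2 <= P c).
  { pose proof (HL t c ltac:(lra) ltac:(lra)) as Hct.
    rewrite (Rabs_minus_sym t c), (Rabs_pos_eq (c - t)) in Hct by lra.
    pose proof (Rle_abs (P t - P c)).
    assert (L0 * (c - t) <= Rabs L0 * h).
    { pose proof (Rle_abs L0). pose proof (Rabs_pos L0). nra. }
    assert (Rabs L0 * h <= L * h) by (unfold L; nra). lra. }
  specialize (HG' c ltac:(lra)).
  replace (t + h - t) with h in Heq by ring.
  assert (kap * (eps / 2) * h <= G' c * h) by (apply Rmult_le_compat_r; nra).
  lra.
Qed.

Lemma tends_to_infty_ext f g l :
  (forall t, f t = g t) -> tends_to_infty f l -> tends_to_infty g l.
Proof.
  intros Hfg Hf eps Heps. destruct (Hf eps Heps) as [T HT].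
  exists T. intros t Ht. rewrite <- Hfg. auto.
Qed.

Lemma tends_to_infty_dominated P f l k t0 : 0 < k -> tends_to_infty P 0 ->
  (forall t, t0 <= t -> Rabs (f t - l) <= k * P t) -> tends_to_infty f l.
Proof.
  intros Hk HP Hf eps Heps.
  destruct (HP (eps / k)) as [T HT]; [apply Rdiv_lt_0_compat; lra|].
  exists (Rmax T t0). intros t Ht.
  specialize (HT t (Rle_trans _ _ _ (Rmax_l _ _) Ht)).
  specialize (Hf t (Rle_trans _ _ _ (Rmax_r _ _) Ht)).
  rewrite Rminus_0_r in HT. pose proof (Rle_abs (P t)).
  assert (k * P t < k * (eps / k)) by (apply Rmult_lt_compat_l; lra).
  replace (k * (eps / k)) with eps in * by (field; lra). lra.
Qed.

Lemma tends_to_infty_sq_dominated P f k t0 : 0 < k -> tends_to_infty P 0 ->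
  (forall t, t0 <= t -> f t ^ 2 <= k * P t) -> tends_to_infty f 0.
Proof.
  intros Hk HP Hf eps Heps.
  destruct (HP (eps ^ 2 / k)) as [T HT]; [apply Rdiv_lt_0_compat; nra|].
  exists (Rmax T t0). intros t Ht.
  specialize (HT t (Rle_trans _ _ _ (Rmax_l _ _) Ht)).
  specialize (Hf t (Rle_trans _ _ _ (Rmax_r _ _) Ht)).
  rewrite Rminus_0_r in *. pose proof (Rle_abs (P t)).
  assert (k * P t < k * (eps ^ 2 / k)) by (apply Rmult_lt_compat_l; lra).
  replace (k * (eps ^ 2 / k)) with (eps ^ 2) in * by (field; lra).
  unfold Rabs; destruct (Rcase_abs (f t)); nra.
Qed.

Lemma bounded_of_sq_le_one t0 f : (forall t, t0 <= t -> f t ^ 2 <= 1) -> bounded_from t0 f.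
Proof.
  intros H. exists 1. intros t Ht. specialize (H t Ht). apply Rabs_le. nra.
Qed.

Lemma Qf_dust v O : Qf 0 v O = v * O.
Proof. unfold Qf, Gp. replace (1 + 0 * v ^ 2) with 1 by ring. rewrite Rinv_1. ring. Qed.

Lemma Gm_dust_inv v : / Gm 0 v = 1.
Proof. unfold Gm. replace (1 - 0 * v ^ 2) with 1 by ring. apply Rinv_1. Qed.

Lemma qf_dust Sp SA SB SC v1 v2 O1 O2 :
  qf 0 Sp SA SB SC v1 v2 O1 O2 =
  2 * Sig2 Sp SA SB SC + / 2 * (O1 + O2 + (v1 ^ 2 * O1 + v2 ^ 2 * O2)).
Proof. unfold qf, Pf. rewrite !Qf_dust. field. Qed.

Lemma tilt_weight_le_density v O : 0 < O <= 1 -> O ^ 2 * (1 - v ^ 2) <= O.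
Proof. intros HO. pose proof (pow2_ge_0 v). nra. Qed.

Section DustSolution.
Variables (tau0 : R) (Sp SA SB SC v1 v2 O1 O2 : R -> R).

(* Shear Sigma^2, tilt contribution V, deceleration parameter q, and the
   quantity P = 3 Sigma^2 + V (equal to 2q - 1 on the constraint surface). *)
Let Sig (t : R) : R := Sp t ^ 2 + SA t ^ 2 + SB t ^ 2 + SC t ^ 2.
Let V (t : R) : R := v1 t ^ 2 * O1 t + v2 t ^ 2 * O2 t.
Let q (t : R) : R := 2 * Sig t + / 2 * (O1 t + O2 t + V t).
Let P (t : R) : R := 3 * Sig t + V t.

Let fluid_eqs (v O : R -> R) : Prop :=
  (forall t, tau0 <= t -> derivable_pt_lim v t ((1 - v t ^ 2) * (2 * Sp t - 1) * v t)) /\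
  (forall t, tau0 <= t ->
     derivable_pt_lim O t ((2 * q t - 1) * O t + (2 * Sp t - 1) * (v t ^ 2 * O t))).

Let tilt_weight (v O : R -> R) (t : R) : R := O t ^ 2 * (1 - v t ^ 2).

Hypothesis dSp : forall t, tau0 <= t ->
  derivable_pt_lim Sp t (- (2 - q t) * Sp t + 3 * SA t ^ 2 - V t).
Hypothesis dSA : forall t, tau0 <= t ->
  derivable_pt_lim SA t (- (2 - q t + 3 * Sp t + sqrt 3 * SB t) * SA t).
Hypothesis dSB : forall t, tau0 <= t ->
  derivable_pt_lim SB t (- (2 - q t) * SB t + sqrt 3 * SA t ^ 2 - 2 * sqrt 3 * SC t ^ 2).
Hypothesis dSC : forall t, tau0 <= t ->
  derivable_pt_lim SC t (- (2 - q t - 2 * sqrt 3 * SB t) * SC t).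
Hypothesis fluid1 : fluid_eqs v1 O1.
Hypothesis fluid2 : fluid_eqs v2 O2.
Hypothesis constraint0 : Sig tau0 + O1 tau0 + O2 tau0 = 1.
Hypotheses (O1_pos0 : 0 < O1 tau0) (O2_pos0 : 0 < O2 tau0).
Hypotheses (v1_sub0 : v1 tau0 ^ 2 < 1) (v2_sub0 : v2 tau0 ^ 2 < 1).

Lemma shear_nonneg t : 0 <= Sig t.
Proof.
  unfold Sig. pose proof (pow2_ge_0 (Sp t)). pose proof (pow2_ge_0 (SA t)).
  pose proof (pow2_ge_0 (SB t)). pose proof (pow2_ge_0 (SC t)). lra.
Qed.

Lemma q_continuous t : tau0 <= t -> continuity_pt q t.
Proof.
  intros Ht. destruct fluid1 as [dv1 dO1], fluid2 as [dv2 dO2].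
  pose proof (derivable_pt_lim_continuous _ _ _ (dSp t Ht)).
  pose proof (derivable_pt_lim_continuous _ _ _ (dSA t Ht)).
  pose proof (derivable_pt_lim_continuous _ _ _ (dSB t Ht)).
  pose proof (derivable_pt_lim_continuous _ _ _ (dSC t Ht)).
  pose proof (derivable_pt_lim_continuous _ _ _ (dv1 t Ht)).
  pose proof (derivable_pt_lim_continuous _ _ _ (dv2 t Ht)).
  pose proof (derivable_pt_lim_continuous _ _ _ (dO1 t Ht)).
  pose proof (derivable_pt_lim_continuous _ _ _ (dO2 t Ht)).
  unfold q, Sig, V. solve_continuity.
Qed.

Section Fluid.
Variables v O : R -> R.
Hypothesis fluid : fluid_eqs v O.

(* Omega solves the linear equation Omega' = (2q - 1 + (2 Sigma_+ - 1) v^2) Omega,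
   so it stays positive. *)
Lemma density_pos : 0 < O tau0 -> forall t, tau0 <= t -> 0 < O t.
Proof.
  destruct fluid as [dv dO]. intros HO0.
  apply (linear_ode_pos O (fun t => 2 * q t - 1 + (2 * Sp t - 1) * v t ^ 2)); [| |exact HO0].
  - intros t Ht. eapply derivable_pt_lim_eq; [apply dO; exact Ht | ring].
  - intros t Ht. pose proof (q_continuous t Ht).
    pose proof (derivable_pt_lim_continuous _ _ _ (dSp t Ht)).
    pose proof (derivable_pt_lim_continuous _ _ _ (dv t Ht)).
    solve_continuity.
Qed.

Lemma tilt_weight_deriv t : tau0 <= t ->
  derivable_pt_lim (tilt_weight v O) t (2 * (2 * q t - 1) * tilt_weight v O t).
Proof.
  destruct fluid as [dv dO]. intros Ht. pose proof (dv t Ht). pose proof (dO t Ht).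
  unfold tilt_weight. eapply derivable_pt_lim_eq; [derive | cbv beta; ring].
Qed.

Lemma tilt_weight_pos : 0 < O tau0 -> v tau0 ^ 2 < 1 ->
  forall t, tau0 <= t -> 0 < tilt_weight v O t.
Proof.
  intros HO0 Hv0. apply (linear_ode_pos _ (fun t => 2 * (2 * q t - 1))).
  - exact tilt_weight_deriv.
  - intros t Ht. pose proof (q_continuous t Ht). solve_continuity.
  - unfold tilt_weight. apply Rmult_lt_0_compat; nra.
Qed.

End Fluid.

(* The Gauss constraint C = 1 - Sigma^2 - Omega_m satisfies C' = 2 q C,
   so it is propagated by the evolution. *)
Lemma constraint_preserved t : tau0 <= t -> Sig t + O1 t + O2 t = 1.
Proof.
  intros Ht. enough (1 - Sig t - O1 t - O2 t = 0) by lra. revert t Ht.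
  apply (linear_ode_zero (fun t => 1 - Sig t - O1 t - O2 t) (fun t => 2 * q t)).
  - destruct fluid1 as [dv1 dO1], fluid2 as [dv2 dO2]. intros t Ht.
    pose proof (dSp t Ht). pose proof (dSA t Ht). pose proof (dSB t Ht).
    pose proof (dSC t Ht). pose proof (dO1 t Ht). pose proof (dO2 t Ht).
    unfold Sig. eapply derivable_pt_lim_eq; [derive | unfold q, Sig, V; cbv beta; field].
  - intros t Ht. pose proof (q_continuous t Ht). solve_continuity.
  - lra.
Qed.

Lemma deceleration_excess t : tau0 <= t -> 2 * q t - 1 = P t.
Proof. intros Ht. pose proof (constraint_preserved t Ht). unfold q, P. lra. Qed.

Lemma in_state_space t : tau0 <= t ->
  0 < O1 t /\ 0 < O2 t /\ v1 t ^ 2 < 1 /\ v2 t ^ 2 < 1 /\ Sig t + O1 t + O2 t = 1.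
Proof.
  intros Ht.
  pose proof (density_pos v1 O1 fluid1 O1_pos0 t Ht).
  pose proof (density_pos v2 O2 fluid2 O2_pos0 t Ht).
  pose proof (tilt_weight_pos v1 O1 fluid1 O1_pos0 v1_sub0 t Ht).
  pose proof (tilt_weight_pos v2 O2 fluid2 O2_pos0 v2_sub0 t Ht).
  unfold tilt_weight in *.
  repeat split; [assumption | assumption | nra | nra | apply constraint_preserved; exact Ht].
Qed.

Lemma P_nonneg t : tau0 <= t -> 0 <= P t.
Proof.
  intros Ht. destruct (in_state_space t Ht) as (HO1 & HO2 & _).
  pose proof (shear_nonneg t). unfold P, V.
  pose proof (pow2_ge_0 (v1 t)). pose proof (pow2_ge_0 (v2 t)). nra.
Qed.

Lemma density_le_one t : tau0 <= t -> O1 t <= 1 /\ O2 t <= 1.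
Proof.
  intros Ht. destruct (in_state_space t Ht) as (HO1 & HO2 & _ & _ & Hc).
  pose proof (shear_nonneg t). lra.
Qed.

(* Since G' = 2 P G with P >= 0 and G > 0, the tilt weights are nondecreasing. *)
Lemma tilt_weight_nondecreasing v O : fluid_eqs v O -> 0 < O tau0 -> v tau0 ^ 2 < 1 ->
  forall s t, tau0 <= s <= t -> tilt_weight v O s <= tilt_weight v O t.
Proof.
  intros Hfl HO0 Hv0 s t Hst.
  apply (nondecreasing_of_deriv _ (fun u => 2 * (2 * q u - 1) * tilt_weight v O u));
    [lra | intros u Hu; apply tilt_weight_deriv; [exact Hfl | lra] |].
  intros u Hu. rewrite deceleration_excess by lra.
  pose proof (P_nonneg u ltac:(lra)). pose proof (tilt_weight_pos v O Hfl HO0 Hv0 u ltac:(lra)).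
  apply Rmult_le_pos; lra.
Qed.

Lemma state_squares_le_one t : tau0 <= t ->
  Sp t ^ 2 <= 1 /\ SA t ^ 2 <= 1 /\ SB t ^ 2 <= 1 /\ SC t ^ 2 <= 1 /\
  v1 t ^ 2 <= 1 /\ v2 t ^ 2 <= 1 /\ O1 t ^ 2 <= 1 /\ O2 t ^ 2 <= 1.
Proof.
  intros Ht. destruct (in_state_space t Ht) as (HO1 & HO2 & Hv1 & Hv2 & Hc).
  destruct (density_le_one t Ht). unfold Sig in Hc.
  pose proof (pow2_ge_0 (Sp t)). pose proof (pow2_ge_0 (SA t)).
  pose proof (pow2_ge_0 (SB t)). pose proof (pow2_ge_0 (SC t)).
  repeat split; nra.
Qed.

Local Ltac from_squares :=
  apply bounded_of_sq_le_one; intros t Ht; pose proof (state_squares_le_one t Ht); tauto.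
Local Ltac from_equation d :=
  eapply lipschitz_of_bounded_deriv; [exact d | regularity].

(* P is Lipschitz: the state variables are bounded, hence so are the right-hand
   sides of the equations, and P is a polynomial in the state variables. *)
Lemma P_lipschitz : lipschitz_from tau0 P.
Proof.
  destruct fluid1 as [dv1 dO1], fluid2 as [dv2 dO2].
  assert (bSp : bounded_from tau0 Sp) by from_squares.
  assert (bSA : bounded_from tau0 SA) by from_squares.
  assert (bSB : bounded_from tau0 SB) by from_squares.
  assert (bSC : bounded_from tau0 SC) by from_squares.
  assert (bv1 : bounded_from tau0 v1) by from_squares.
  assert (bv2 : bounded_from tau0 v2) by from_squares.
  assert (bO1 : bounded_from tau0 O1) by from_squares.
  assert (bO2 : bounded_from tau0 O2) by from_squares.
  assert (bq : bounded_from tau0 q) by (unfold q, Sig, V; regularity).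
  assert (lSp : lipschitz_from tau0 Sp) by from_equation dSp.
  assert (lSA : lipschitz_from tau0 SA) by from_equation dSA.
  assert (lSB : lipschitz_from tau0 SB) by from_equation dSB.
  assert (lSC : lipschitz_from tau0 SC) by from_equation dSC.
  assert (lv1 : lipschitz_from tau0 v1) by from_equation dv1.
  assert (lv2 : lipschitz_from tau0 v2) by from_equation dv2.
  assert (lO1 : lipschitz_from tau0 O1) by from_equation dO1.
  assert (lO2 : lipschitz_from tau0 O2) by from_equation dO2.
  unfold P, Sig, V. regularity.
Qed.

(* Barbalat's lemma applied to the nondecreasing bounded weight G_(1):
   G_(1)' = 2 P G_(1) >= 2 G_(1)(tau0) P. *)
Lemma P_tends_to_zero : tends_to_infty P 0.
Proof.
  set (G0 := tilt_weight v1 O1 tau0).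
  assert (HG0 : 0 < G0) by (apply tilt_weight_pos; auto; lra).
  apply (barbalat (tilt_weight v1 O1) (fun t => 2 * (2 * q t - 1) * tilt_weight v1 O1 t)
           P tau0 1 (2 * G0)).
  - lra.
  - apply tilt_weight_deriv. exact fluid1.
  - intros t Ht. rewrite deceleration_excess by exact Ht.
    pose proof (P_nonneg t Ht).
    pose proof (tilt_weight_nondecreasing v1 O1 fluid1 O1_pos0 v1_sub0 tau0 t ltac:(lra))
      as Hmono.
    fold G0 in Hmono. nra.
  - intros t Ht. destruct (in_state_space t Ht) as (HO1 & _). destruct (density_le_one t Ht).
    pose proof (tilt_weight_le_density (v1 t) (O1 t) ltac:(lra)). unfold tilt_weight. lra.
  - exact P_nonneg.
  - exact P_lipschitz.
Qed.

Lemma shear_tilt_le_P t : tau0 <= t ->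
  0 <= Sig t <= P t /\ v1 t ^ 2 * O1 t <= P t /\ v2 t ^ 2 * O2 t <= P t.
Proof.
  intros Ht. destruct (in_state_space t Ht) as (HO1 & HO2 & _).
  pose proof (shear_nonneg t). unfold P, V.
  pose proof (pow2_ge_0 (v1 t)). pose proof (pow2_ge_0 (v2 t)). nra.
Qed.

(* A tilt velocity is controlled by P through its weight:
   v^2 G(tau0) <= v^2 G(t) <= v^2 Omega <= P. *)
Lemma tilt_velocity_sq_le v O : fluid_eqs v O -> 0 < O tau0 -> v tau0 ^ 2 < 1 ->
  (forall t, tau0 <= t -> 0 < O t <= 1 /\ v t ^ 2 * O t <= P t) ->
  forall t, tau0 <= t -> v t ^ 2 <= / tilt_weight v O tau0 * P t.
Proof.
  intros Hfl HO0 Hv0 HOP t Ht. destruct (HOP t Ht) as [HO HvP].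
  pose proof (tilt_weight_pos v O Hfl HO0 Hv0 tau0 (Rle_refl tau0)) as HG0.
  pose proof (tilt_weight_nondecreasing v O Hfl HO0 Hv0 tau0 t ltac:(lra)) as Hmono.
  pose proof (tilt_weight_le_density (v t) (O t) HO). pose proof (pow2_ge_0 (v t)).
  apply (Rmult_le_reg_l (tilt_weight v O tau0)); [exact HG0|].
  rewrite <- Rmult_assoc, Rinv_r, Rmult_1_l by lra.
  unfold tilt_weight in *. nra.
Qed.

(* Every quantity of the conclusion is dominated by P, which tends to 0. *)
Theorem dust_asymptotics :
  tends_to_infty q (/ 2) /\ tends_to_infty (fun t => O1 t + O2 t) 1 /\
  tends_to_infty Sp 0 /\ tends_to_infty SA 0 /\
  tends_to_infty SB 0 /\ tends_to_infty SC 0 /\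
  tends_to_infty v1 0 /\ tends_to_infty v2 0.
Proof.
  pose proof P_tends_to_zero as HP.
  assert (Hsig : forall t, tau0 <= t -> 0 <= Sig t <= P t)
    by (intros t Ht; apply (shear_tilt_le_P t Ht)).
  split; [|split; [|split; [|split; [|split; [|split; [|split]]]]]].
  - apply (tends_to_infty_dominated P q (/ 2) 1 tau0); [lra | exact HP |].
    intros t Ht. pose proof (deceleration_excess t Ht). pose proof (P_nonneg t Ht).
    apply Rabs_le. lra.
  - apply (tends_to_infty_dominated P (fun t => O1 t + O2 t) 1 1 tau0); [lra | exact HP |].
    intros t Ht. pose proof (constraint_preserved t Ht). pose proof (Hsig t Ht).
    apply Rabs_le. lra.
  - apply (tends_to_infty_sq_dominated P Sp 1 tau0); [lra | exact HP |].
    intros t Ht. pose proof (Hsig t Ht). unfold Sig in *. nra.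
  - apply (tends_to_infty_sq_dominated P SA 1 tau0); [lra | exact HP |].
    intros t Ht. pose proof (Hsig t Ht). unfold Sig in *. nra.
  - apply (tends_to_infty_sq_dominated P SB 1 tau0); [lra | exact HP |].
    intros t Ht. pose proof (Hsig t Ht). unfold Sig in *. nra.
  - apply (tends_to_infty_sq_dominated P SC 1 tau0); [lra | exact HP |].
    intros t Ht. pose proof (Hsig t Ht). unfold Sig in *. nra.
  - apply (tends_to_infty_sq_dominated P v1 (/ tilt_weight v1 O1 tau0) tau0); [| exact HP |].
    + apply Rinv_0_lt_compat, tilt_weight_pos; auto. lra.
    + apply tilt_velocity_sq_le; auto. intros t Ht.
      pose proof (in_state_space t Ht). pose proof (density_le_one t Ht).
      pose proof (shear_tilt_le_P t Ht). repeat split; tauto.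
  - apply (tends_to_infty_sq_dominated P v2 (/ tilt_weight v2 O2 tau0) tau0); [| exact HP |].
    + apply Rinv_0_lt_compat, tilt_weight_pos; auto. lra.
    + apply tilt_velocity_sq_le; auto. intros t Ht.
      pose proof (in_state_space t Ht). pose proof (density_le_one t Ht).
      pose proof (shear_tilt_le_P t Ht). repeat split; tauto.
Qed.

End DustSolution.

Ltac dust_equation Hsys :=
  intros t Ht; destruct (Hsys t Ht) as (? & ? & ? & ? & ? & ? & ? & ?);
  eapply derivable_pt_lim_eq; [eassumption|];
  rewrite ?qf_dust, ?Qf_dust, ?Gm_dust_inv; unfold Sig2; field.

(* Specialize the dust analysis. *)
Theorem mainTheorem1
  (tau0 : R) (Sp SA SB SC v1 v2 O1 O2 : R -> R) :
  let w := 0 in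
  let q t := qf w (Sp t) (SA t) (SB t) (SC t) (v1 t) (v2 t) (O1 t) (O2 t) in
  (forall t, tau0 <= t ->
     derivable_pt_lim Sp t
       (- (2 - q t) * Sp t + 3 * (SA t)^2
        - Qf w (v1 t) (O1 t) * v1 t - Qf w (v2 t) (O2 t) * v2 t) /\
     derivable_pt_lim SA t
       (- (2 - q t + 3 * Sp t + sqrt 3 * SB t) * SA t) /\
     derivable_pt_lim SB t
       (- (2 - q t) * SB t + sqrt 3 * (SA t)^2 - 2 * sqrt 3 * (SC t)^2) /\
     derivable_pt_lim SC t
       (- (2 - q t - 2 * sqrt 3 * SB t) * SC t) /\
     derivable_pt_lim v1 t
       (/ Gm w (v1 t) * (1 - (v1 t)^2) * (3 * w - 1 + 2 * Sp t) * v1 t) /\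
     derivable_pt_lim v2 t
       (/ Gm w (v2 t) * (1 - (v2 t)^2) * (3 * w - 1 + 2 * Sp t) * v2 t) /\
     derivable_pt_lim O1 t
       ((2 * q t - 1 - 3 * w) * O1 t
        + (3 * w - 1 + 2 * Sp t) * Qf w (v1 t) (O1 t) * v1 t) /\
     derivable_pt_lim O2 t
       ((2 * q t - 1 - 3 * w) * O2 t
        + (3 * w - 1 + 2 * Sp t) * Qf w (v2 t) (O2 t) * v2 t)) ->
  (* at tau0: interior of the state space and constraints *)
  0 < O1 tau0 * O2 tau0 -> 0 <= O1 tau0 -> 0 <= O2 tau0 ->
  0 < (v1 tau0)^2 < 1 -> 0 < (v2 tau0)^2 < 1 ->
  1 - Sig2 (Sp tau0) (SA tau0) (SB tau0) (SC tau0) - O1 tau0 - O2 tau0 = 0 ->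
  Qf w (v1 tau0) (O1 tau0) + Qf w (v2 tau0) (O2 tau0) = 0 ->
  tends_to_infty q (/ 2) /\
  tends_to_infty (fun t => O1 t + O2 t) 1 /\
  tends_to_infty Sp 0 /\ tends_to_infty SA 0 /\
  tends_to_infty SB 0 /\ tends_to_infty SC 0 /\
  tends_to_infty v1 0 /\ tends_to_infty v2 0.
Proof.
  intros w q Hsys HO12 HO1 HO2 Hv1 Hv2 Hconstr _. subst w q.
  destruct (dust_asymptotics tau0 Sp SA SB SC v1 v2 O1 O2) as [Hlim_q Hlim].
  1-4: dust_equation Hsys.
  1-2: split; dust_equation Hsys.
  - unfold Sig2 in Hconstr. lra.
  - nra.
  - nra.
  - lra.
  - lra.
  - split; [|exact Hlim]. eapply tends_to_infty_ext; [|exact Hlim_q].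
    intros t. cbv beta. rewrite qf_dust. reflexivity.
Qed.
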